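(* Consider the cache-aided combination network described in the context with user cache size $M$ and relay cache size $N$ satisfying $0<M+rN\le D$. Then every achievable rate pair $(R_1,R_2)$ satisfies $$R_1\ge \max\left(\max_{l\in\{r,\dots,h\}}\ \max_{s\in\{1,\dots,\min(D,\binom{l}{r})\}}\frac1l\Big(s-\frac{sM+lN}{\lfloor D/s\rfloor}\Big),\ \max_{x\in\{1,\dots,\min(D,K)\}}\frac1u\Big(x-\frac{xM+uN}{\lfloor D/x\rfloor}\Big)\right),$$ where $u=\min(x+r-1,h)$, and $$R_2\ge \frac1r\Big(1-\frac MD\Big).$$
   Context: Combination network: a server holds $D$ independent files $W_1,\dots,W_D$, each uniformly distributed over $F$ bits. There are $h$ relay nodes $\Gamma_1,\dots,\Gamma_h$ and $K=\binom{h}{r}$ end users ($r<h$); each end user is connected to a distinct set of $r$ relays (one user for each $r$-subset), so each relay is connected to $\hat K=\binom{h-1}{r-1}$ users. The server is connected to every relay; all links are noiseless unicast links. Assume $K\le D$. Each end user has a cache of $MF$ bits, each relay a cache of $NF$ bits. Placement phase (before demands): relay $j$ stores $V_j$, user $k$ stores $Z_k$, functions of the files with $H(V_j)\le NF$, $H(Z_k)\le MF$. Delivery phase: user $k$ requests $W_{d_k}$ for an arbitrary demand vector $\mathbf d\in\{1,\dots,D\}^K$; the server sends relay $\Gamma_i$ a signal $X_{i,\mathbf d}$ of $R_1F$ bits; relay $\Gamma_i$ sends each connected user $k$ a signal $Y_{i,\mathbf d,k}$ of $R_2F$ bits, a function of $X_{i,\mathbf d},V_i,\mathbf d$; user $k$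 decodes from $Z_k$, $\mathbf d$ and its $r$ received signals. $(R_1,R_2)$ (normalized by $F$) is achievable if for every $\epsilon>0$ and all sufficiently large $F$ there is such a scheme with $\max_{\mathbf d,k}P(\hat W_{d_k}\ne W_{d_k})<\epsilon$. *)

From HB Require Import structures.
From mathcomp Require Import all_boot all_order all_algebra.
From mathcomp Require Import reals exp.
Set Implicit Arguments. Unset Strict Implicit. Unset Printing Implicit Defensive.
Import Order.TTheory GRing.Theory Num.Theory.
Local Open Scope ring_scope.

(* End users: one for each r-subset of the h relays; user k is connected
   exactly to the relays in [val k].  Hence K = #|user h r| = 'C(h, r). *)
Definition user (h r : nat) := {S : {set 'I_h} | #|S| == r}.

Definition files (D F : nat) := {ffun 'I_D -> F.-tuple bool}.

Definition demand (h r D : nat) := {ffun user h r -> 'I_D}.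

Definition prob_val (R : realType) (T : finType) (U : eqType) (f : T -> U) (y : U) : R :=
  #|[set t | f t == y]|%:R / #|T|%:R.

(* Shannon entropy in bits of the random variable f(t), t uniform on T. *)
Definition entropy2 (R : realType) (T : finType) (U : eqType) (f : T -> U) : R :=
  \sum_(y <- undup (map f (enum T)))
     - (prob_val R f y * (ln (prob_val R f y) / ln 2)).

Record scheme (R : realType) (h r D F : nat) (M N R1 R2 : R) := Scheme {
  n1 : nat;                      (* length in bits of server->relay signals *)
  n2 : nat;                      (* length in bits of relay->user signals *)
  n1_le : n1%:R <= R1 * F%:R;
  n2_le : n2%:R <= R2 * F%:R;
  relay_cache : 'I_h -> files D F -> nat;
  user_cache : user h r -> files D F -> nat;
  relay_cache_ok : forall j, entropy2 R (relay_cache j) <= N * F%:R;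
  user_cache_ok : forall k, entropy2 R (user_cache k) <= M * F%:R;
  server_sig : 'I_h -> demand h r D -> files D F -> n1.-tuple bool;
  relay_sig : 'I_h -> demand h r D -> user h r -> n1.-tuple bool -> nat -> n2.-tuple bool;
  decoder : user h r -> demand h r D -> nat -> {ffun 'I_h -> n2.-tuple bool} -> F.-tuple bool
}.

Arguments relay_cache {R h r D F M N R1 R2} s _ _.
Arguments user_cache {R h r D F M N R1 R2} s _ _.
Arguments server_sig {R h r D F M N R1 R2} s _ _ _.
Arguments relay_sig {R h r D F M N R1 R2} s _ _ _ _ _.
Arguments decoder {R h r D F M N R1 R2} s _ _ _ _.

(* The signals received by user k: entries for relays not connected to k are
   a fixed constant, so the decoder only uses the r connected relays. *)
Definition received (R : realType) h r D F (M N R1 R2 : R)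
  (sc : scheme h r D F M N R1 R2) (k : user h r) (d : demand h r D) (w : files D F)
  : {ffun 'I_h -> (n2 sc).-tuple bool} :=
  [ffun i => if i \in val k
             then relay_sig sc i d k (server_sig sc i d w) (relay_cache sc i w)
             else [tuple false | _ < n2 sc]].

Definition err_prob (R : realType) h r D F (M N R1 R2 : R)
  (sc : scheme h r D F M N R1 R2) (k : user h r) (d : demand h r D) : R :=
  #|[set w : files D F |
      decoder sc k d (user_cache sc k w) (received sc k d w) != w (d k)]|%:R
  / #|{: files D F}|%:R.

Definition achievable (R : realType) (h r D : nat) (M N R1 R2 : R) : Prop :=
  forall eps : R, 0 < eps ->
  exists F0 : nat, forall F : nat, (F0 <= F)%N ->
  exists sc : scheme h r D F M N R1 R2,
    forall (k : user h r) (d : demand h r D), err_prob sc k d < eps.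

From HB Require Import structures.
From mathcomp Require Import all_boot all_order all_algebra.
From mathcomp Require Import reals exp.
From mathcomp Require Import ring lra zify.
Import Order.TTheory GRing.Theory Num.Theory.
Local Open Scope ring_scope.
Set Implicit Arguments. Unset Strict Implicit.

(* Cut-set bounds through Fano's inequality.  If users k_p (p in P) request
   pairwise distinct files under demands d_p, any function Phi of the files
   that determines the cache and the incoming signals of every k_p recovers,
   up to decoding errors, #|P| F independent uniform bits; by Fano,
   #|P| F <= H(Phi) + o(F) as the error probability vanishes, and
   subadditivity bounds H(Phi) by the sizes of its components.
   For R1, take l relays, s of the C(l, r) users connected only to them, and
   q = D / s demands asking disjoint blocks of s files: the q l server signals
   to these relays, their l caches and the s user caches give
   q s <= q l R1 + l N + s M.  For R2, one user asks in turn for each of the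
   D files: its D r incoming signals and its cache give D <= D r R2 + M.
   The bound indexed by x is the first one for l = min(x + r - 1, h), since
   x <= C(x + r - 1, r). *)

Definition determines (T U V : Type) (g : T -> V) (f : T -> U) :=
  forall t1 t2, g t1 = g t2 -> f t1 = f t2.

Lemma card_le_sum_cover (T P : finType) (A : {pred T}) (B : P -> {pred T}) :
  (forall t, t \in A -> exists p, t \in B p) -> (#|A| <= \sum_p #|B p|)%N.
Proof.
move=> cover; rewrite -sum1_card.
apply: (@leq_trans (\sum_(t in A) \sum_p (t \in B p))).
  by apply: leq_sum => t /cover [p tp]; rewrite (bigD1 p) //= tp leq_addr.
rewrite exchange_big; apply: leq_sum => p _.
rewrite -sum1_card big_mkcond [X in (_ <= X)%N]big_mkcond; apply: leq_sum => t _.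
by case: (t \in A); case: (t \in B p).
Qed.

Definition ffun_extend (I U : finType) (V : Type) (u : I -> U) (g : I -> V) (v0 : V)
  : {ffun U -> V} := [ffun x => if [pick i | u i == x] is Some i then g i else v0].

Lemma ffun_extendE (I U : finType) (V : Type) (u : I -> U) (g : I -> V) (v0 : V) i :
  injective u -> ffun_extend u g v0 (u i) = g i.
Proof.
move=> u_inj; rewrite ffunE; case: pickP => [i' /eqP /u_inj -> // | none].
by have := none i; rewrite eqxx.
Qed.

Lemma card_ord_lt (h l : nat) : (l <= h)%N -> #|[set i : 'I_h | (i < l)%N]| = l.
Proof.
move=> lh; have widen_inj : injective (widen_ord lh).
  by move=> i j /(congr1 val) ij; apply: val_inj.
rewrite -[RHS](card_ord l) -(card_imset _ widen_inj).
apply: eq_card => i; rewrite inE; apply/idP/imsetP => [il | [j _ ->]].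
  by exists (Ordinal il); rewrite ?inE //; apply: val_inj.
exact: ltn_ord j.
Qed.

Lemma leq_bin_addn_pred (x r : nat) : (0 < r)%N -> (0 < x)%N -> (x <= 'C(x + r - 1, r))%N.
Proof.
case: r => // r _; case: x => // y _.
rewrite addSn subn1 /= addnS.
elim: y => [|y IH]; first by rewrite add0n binn.
rewrite addSn binS.
have : (0 < 'C(y + r.+1, r))%N by rewrite bin_gt0; lia.
move: IH; rewrite addnS; lia.
Qed.

Lemma ln_le_subr1 (R : realType) (x : R) : 0 < x -> ln x <= x - 1.
Proof.
move=> x0; have := @le_ln1Dx R (x - 1).
rewrite addrCA subrr addr0; apply; lra.
Qed.

Lemma mul_ln_ratio_le (R : realType) (k n : nat) : (k <= n)%N ->
  k%:R * (ln n%:R - ln k%:R) <= n%:R :> R.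
Proof.
move=> kn; have [-> | k0] := posnP k; first by rewrite mul0r ler0n.
have kR : 0 < k%:R :> R by rewrite ltr0n.
have nR : 0 < n%:R :> R by rewrite ltr0n (leq_trans k0).
rewrite -ln_div ?posrE //.
apply: le_trans (ler_wpM2l (ltW kR) (ln_le_subr1 (divr_gt0 nR kR))) _.
rewrite mulrBr mulr1 mulrC divfK ?lt0r_neq0 //; lra.
Qed.

Lemma ler_slope_of_eventually (R : realType) (a b c k : R) : 0 <= k -> 0 <= c ->
  (forall eps : R, 0 < eps -> exists F0 : nat, forall F : nat, (F0 <= F)%N ->
     c * F%:R <= b * F%:R + a + k * eps * (c * F%:R + 1)) -> c <= b.
Proof.
move=> k0 c0 ev; rewrite leNgt; apply/negP => bc.
have d0 : 0 < c - b by rewrite subr_gt0.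
have kc0 : 0 < k * (c + 1) + 1 by rewrite ltr_pwDr ?mulr_ge0 ?addr_ge0.
(* The error term then costs at most half of the gap (c - b) F. *)
set eps := (c - b) / (2 * (k * (c + 1) + 1)).
have e0 : 0 < eps by rewrite divr_gt0 ?mulr_gt0.
have keps : k * eps * (c + 1) <= (c - b) / 2.
  have -> : k * eps * (c + 1) = (c - b) / 2 * (k * (c + 1) / (k * (c + 1) + 1)).
    by rewrite /eps; field; rewrite lt0r_neq0.
  rewrite -[X in _ <= X]mulr1 ler_wpM2l ?divr_ge0 ?ltW //.
  by rewrite ltr_pdivrMr // mul1r ltrDl ltr01.
have [F0 HF] := ev eps e0.
pose F := maxn F0 (Num.truncn (2 * `|a| / (c - b))).+1.
have F1 : 1 <= F%:R :> R by rewrite ler1n /F leq_max orbT.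
have F_large : 2 * `|a| / (c - b) < F%:R.
  apply: lt_le_trans (truncnS_gt _) _.
  by rewrite ler_nat leq_maxr.
have slack : k * eps * (c * F%:R + 1) <= (c - b) / 2 * F%:R.
  apply: le_trans (_ : k * eps * ((c + 1) * F%:R) <= _).
    by apply: ler_wpM2l; [rewrite mulr_ge0 // ltW | rewrite mulrDl mul1r lerD2l].
  by rewrite mulrA ler_wpM2r ?(le_trans ler01).
have := HF F (leq_maxl _ _).
move: F_large; rewrite ltr_pdivrMr // => F_large.
have := ler_norm a; nra.
Qed.

Section FiberEntropy.
Variables (R : realType) (T : finType).

Definition fiber_card (U : eqType) (f : T -> U) (t : T) : nat :=
  #|[set t' | f t' == f t]|.

(* [#|T| * ln 2] times [entropy2 f]: the entropy in nats, scaled so that it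
   is a plain sum over the (equiprobable) points of [T]. *)
Definition fiber_entropy (U : eqType) (f : T -> U) : R :=
  \sum_t (ln #|T|%:R - ln (fiber_card f t)%:R).

Lemma fiber_card_gt0 (U : eqType) (f : T -> U) t : (0 < fiber_card f t)%N.
Proof. by apply/card_gt0P; exists t; rewrite inE. Qed.

Lemma fiber_cardE (U : eqType) (f : T -> U) t :
  (fiber_card f t)%:R = \sum_t' ((f t' == f t)%:R : R).
Proof.
rewrite -sumr_const big_mkcond /=; apply: eq_bigr => t' _.
by rewrite inE; case: (f t' == f t).
Qed.

Lemma sum_fibers_undup (U : eqType) (f : T -> U) (G : T -> R) :
  \sum_t G t = \sum_(y <- undup (map f (enum T))) \sum_(t | f t == y) G t.
Proof.
under [RHS]eq_bigr do rewrite big_mkcond.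
rewrite [RHS]exchange_big /=; apply: eq_bigr => t _.
rewrite -big_mkcond -big_filter.
have -> : [seq y <- undup (map f (enum T)) | f t == y] = [:: f t].
  rewrite -(filter_pred1_uniq (undup_uniq (map f (enum T)))); last first.
    by rewrite mem_undup map_f ?mem_enum.
  by apply: eq_filter => y /=; rewrite eq_sym.
by rewrite big_seq1.
Qed.

Lemma entropy2E (U : eqType) (f : T -> U) :
  entropy2 R f = fiber_entropy f / (#|T|%:R * ln 2).
Proof.
rewrite /fiber_entropy (sum_fibers_undup f) /entropy2 mulr_suml.
apply: eq_big_seq => y; rewrite mem_undup => /mapP [t0 _ ->].
rewrite (eq_bigr (fun _ => ln #|T|%:R - ln (fiber_card f t0)%:R)); last first.
  by move=> t /eqP ft; rewrite /fiber_card ft.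
rewrite sumr_const.
have -> : #|[pred t | f t == f t0]| = fiber_card f t0.
  by apply: eq_card => t; rewrite inE.
have cR : 0 < (fiber_card f t0)%:R :> R by rewrite ltr0n fiber_card_gt0.
have TR : 0 < #|T|%:R :> R by rewrite ltr0n; apply/card_gt0P; exists t0.
have l2 : 0 < ln 2 :> R by rewrite ln_gt0 ?ltr1n.
rewrite /prob_val -/(fiber_card f t0) ln_div ?posrE // -mulr_natl.
by field; rewrite !lt0r_neq0.
Qed.

Lemma sum_ln_le_ln_mean (A : {pred T}) (a : T -> R) :
  (0 < #|A|)%N -> (forall t, t \in A -> 0 < a t) ->
  \sum_(t in A) ln (a t) <= #|A|%:R * ln ((\sum_(t in A) a t) / #|A|%:R).
Proof.
move=> A0 apos; set m := (\sum_(t in A) a t) / #|A|%:R.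
have nR : 0 < #|A|%:R :> R by rewrite ltr0n.
have S0 : 0 < \sum_(t in A) a t.
  case/card_gt0P: A0 => t0 t0A; rewrite (bigD1 t0) //= ltr_wpDr ?apos //.
  by apply: sumr_ge0 => t /andP [tA _]; apply/ltW/apos.
have m0 : 0 < m by rewrite divr_gt0.
have tangent t : t \in A -> ln (a t) <= a t / m - 1 + ln m.
  move=> tA; have := ln_le_subr1 (divr_gt0 (apos t tA) m0).
  by rewrite ln_div ?posrE ?apos //; lra.
apply: le_trans (ler_sum _ tangent) _.
rewrite !big_split /= sumr_const -mulr_suml sumr_const.
have -> : (\sum_(t in A) a t) / m = #|A|%:R.
  by rewrite /m invfM invrK mulrA mulfV ?mul1r ?lt0r_neq0.
rewrite -mulr_natl -[ln m *+ _]mulr_natl; lra.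
Qed.

Lemma fiber_entropy_le_det (U V : eqType) (f : T -> U) (g : T -> V) :
  determines g f -> fiber_entropy f <= fiber_entropy g.
Proof.
move=> det; apply: ler_sum => t _; rewrite lerD2l lerN2.
rewrite ler_ln ?posrE ?ltr0n ?fiber_card_gt0 // ler_nat.
by apply/subset_leq_card/subsetP => t'; rewrite !inE => /eqP /det ->.
Qed.

Lemma fiber_entropy_const (U : eqType) (c : U) : fiber_entropy (fun _ => c) = 0.
Proof.
rewrite /fiber_entropy big1 // => t _.
suff -> : fiber_card (fun _ => c) t = #|T| by rewrite subrr.
by apply: eq_card => t'; rewrite !inE eqxx.
Qed.

Lemma fiber_entropy_id : fiber_entropy id = #|T|%:R * ln #|T|%:R.
Proof.
rewrite /fiber_entropy (eq_bigr (fun _ => ln #|T|%:R)) ?sumr_const ?mulr_natl //.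
move=> t _; suff -> : fiber_card id t = 1%N by rewrite ln1 subr0.
by rewrite -(cards1 t); apply: eq_card => t'; rewrite !inE.
Qed.

Lemma fiber_entropy_card0 (U : eqType) (f : T -> U) :
  #|T| = 0%N -> fiber_entropy f = 0.
Proof.
by move=> T0; rewrite /fiber_entropy big_pred0 // => t; have := card0_eq T0 t; rewrite inE.
Qed.

Lemma sum_inv_card_le1 (A : {pred T}) (c : T -> nat) :
  (forall t, t \in A -> c t = #|A|) -> \sum_(t in A) ((c t)%:R)^-1 <= 1 :> R.
Proof.
move=> cA; rewrite (eq_bigr (fun _ => (#|A|%:R)^-1)); last by move=> t /cA ->.
rewrite sumr_const -(mulr_natr ((#|A|%:R)^-1)).
have [-> | A0] := posnP #|A|; first by rewrite mulr0 ler01.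
by rewrite mulVf // pnatr_eq0 -lt0n.
Qed.

Lemma sum_inv_fiber_card_le (V : finType) (f : T -> V) :
  \sum_t ((fiber_card f t)%:R)^-1 <= #|V|%:R :> R.
Proof.
rewrite (partition_big f predT) //= -sumr_const; apply: ler_sum => v _.
apply: (@sum_inv_card_le1 [pred t | f t == v]) => t /eqP ftv.
by rewrite /fiber_card ftv; apply: eq_card => t'; rewrite inE.
Qed.

Lemma fiber_entropy_le_card (V : finType) (f : T -> V) :
  fiber_entropy f <= #|T|%:R * ln #|V|%:R.
Proof.
have [T0 | T0] := posnP #|T|; first by rewrite fiber_entropy_card0 // T0 mul0r.
have TR : 0 < #|T|%:R :> R by rewrite ltr0n.
have cR t : 0 < (fiber_card f t)%:R :> R by rewrite ltr0n fiber_card_gt0.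
have inv_pos t : 0 < #|T|%:R / (fiber_card f t)%:R :> R by rewrite divr_gt0 ?cR.
rewrite /fiber_entropy (eq_bigr (fun t => ln (#|T|%:R / (fiber_card f t)%:R))); last first.
  by move=> t _; rewrite ln_div ?posrE.
apply: le_trans (sum_ln_le_ln_mean T0 (fun t _ => inv_pos t)) _.
rewrite ler_wpM2l ?ler0n // ler_ln ?posrE; first last.
- by rewrite ltr0n; case/card_gt0P: T0 => t _; apply/card_gt0P; exists (f t).
- rewrite divr_gt0 //; case/card_gt0P: (T0) => t0 _; rewrite (bigD1 t0) //=.
  by rewrite ltr_pwDl // sumr_ge0 // => t _; apply/ltW.
rewrite -mulr_sumr mulrC mulrA mulVf ?mul1r ?lt0r_neq0 //.
exact: sum_inv_fiber_card_le.
Qed.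

Lemma sum_fiber_ratio_pair_le (U V : eqType) (f : T -> U) (g : T -> V) :
  \sum_t ((fiber_card f t)%:R * (fiber_card g t)%:R
          / (fiber_card (fun t => (f t, g t)) t)%:R) <= #|T|%:R * #|T|%:R :> R.
Proof.
set fg := fun t => (f t, g t).
have -> : \sum_t ((fiber_card f t)%:R * (fiber_card g t)%:R / (fiber_card fg t)%:R)
   = \sum_t1 \sum_t2 \sum_t ((f t1 == f t)%:R * (g t2 == g t)%:R
        / (fiber_card fg t)%:R) :> R.
  symmetry; under eq_bigr do rewrite exchange_big /=.
  rewrite exchange_big /=; apply: eq_bigr => t _.
  rewrite (fiber_cardE f) (fiber_cardE g) !mulr_suml; apply: eq_bigr => t1 _.
  by rewrite mulr_sumr mulr_suml.
apply: le_trans (_ : \sum_(t1 : T) \sum_(t2 : T) (1 : R) <= _); last first.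
  by rewrite !sumr_const -(mulr_natr (#|T|%:R)).
apply: ler_sum => t1 _; apply: ler_sum => t2 _.
pose A := [pred t | (f t == f t1) && (g t == g t2)].
apply: le_trans (_ : \sum_(t in A) ((fiber_card fg t)%:R)^-1 <= _).
  rewrite [X in _ <= X]big_mkcond /=; apply: ler_sum => t _.
  rewrite inE eq_sym (eq_sym (g t2)).
  by case: (f t == f t1); case: (g t == g t2); rewrite ?mul1r ?mul0r.
apply: sum_inv_card_le1 => t; rewrite inE => /andP [/eqP e1 /eqP e2].
by apply: eq_card => t'; rewrite !inE xpair_eqE e1 e2.
Qed.

Lemma fiber_entropy_pair (U V : eqType) (f : T -> U) (g : T -> V) :
  fiber_entropy (fun t => (f t, g t)) <= fiber_entropy f + fiber_entropy g.
Proof.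
have [T0 | T0] := posnP #|T|; first by rewrite !fiber_entropy_card0 // addr0.
set fg := fun t => (f t, g t).
have TR : 0 < #|T|%:R :> R by rewrite ltr0n.
have cR (W : eqType) (k : T -> W) t : 0 < (fiber_card k t)%:R :> R.
  by rewrite ltr0n fiber_card_gt0.
pose a t := (fiber_card f t)%:R * (fiber_card g t)%:R
            / (#|T|%:R * (fiber_card fg t)%:R) : R.
have apos t : 0 < a t by rewrite divr_gt0 ?mulr_gt0.
have gap : fiber_entropy f + fiber_entropy g - fiber_entropy fg = - \sum_t ln (a t).
  rewrite /fiber_entropy -big_split -sumrB -sumrN; apply: eq_bigr => t _.
  rewrite /a ln_div ?posrE ?mulr_gt0 // !lnM ?posrE //=; lra.
have mean_le1 : (\sum_t a t) / #|T|%:R <= 1.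
  rewrite ler_pdivrMr // mul1r.
  rewrite (eq_bigr (fun t => (fiber_card f t)%:R * (fiber_card g t)%:R
                             / (fiber_card fg t)%:R / #|T|%:R)); last first.
    by move=> t _; rewrite /a invfM; field; rewrite !lt0r_neq0.
  by rewrite -mulr_suml ler_pdivrMr // sum_fiber_ratio_pair_le.
(* Nonnegativity of the mutual information, by concavity of ln. *)
have : \sum_t ln (a t) <= 0.
  apply: le_trans (sum_ln_le_ln_mean (A := predT) T0 (fun t _ => apos t)) _.
  by rewrite mulr_ge0_le0 ?ler0n ?ln_le0.
move: gap; lra.
Qed.

Lemma fiber_entropy_seq (I : Type) (U : eqType) (f : I -> T -> U) (s : seq I) :
  fiber_entropy (fun t => map (f^~ t) s) <= \sum_(i <- s) fiber_entropy (f i).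
Proof.
elim: s => [|i s IH]; first by rewrite big_nil fiber_entropy_const.
rewrite big_cons.
apply: le_trans (_ : fiber_entropy (fun t => (f i t, map (f^~ t) s)) <= _).
  by apply: fiber_entropy_le_det => t1 t2 [e1 e2] /=; rewrite e1 e2.
by apply: le_trans (fiber_entropy_pair _ _) _; rewrite lerD2l.
Qed.

Definition error_value (V : eqType) (est Y : T -> V) (t : T) : option V :=
  if est t == Y t then None else Some (Y t).

Lemma fiber_entropy_error_value (V : finType) (est Y : T -> V) :
  fiber_entropy (error_value est Y)
    <= 2 * #|T|%:R + #|[pred t | est t != Y t]|%:R * ln (#|V|.+1)%:R.
Proof.
set E := error_value est Y; set B := [pred t | est t != Y t].
have -> : 2 * #|T|%:R = #|T|%:R + #|T|%:R :> R by ring.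
(* The correctly estimated points form a single fiber of [E]. *)
rewrite /fiber_entropy (bigID (fun t => est t == Y t)) /= -addrA.
apply: lerD.
  rewrite (eq_bigr (fun _ => ln #|T|%:R - ln #|[pred t | est t == Y t]|%:R)).
    by rewrite sumr_const -[_ *+ _]mulr_natl; apply: mul_ln_ratio_le (max_card _).
  move=> t et; congr (_ - ln _%:R); apply: eq_card => t'.
  by rewrite !inE /E /error_value et; case: (est t' == Y t').
have [B0 | B0] := posnP #|B|.
  rewrite big_pred0; first by rewrite B0 mul0r addr0 ler0n.
  by move=> t; have := card0_eq B0 t; rewrite !inE.
have TR : 0 < #|T|%:R :> R.
  by rewrite ltr0n; case/card_gt0P: B0 => t _; apply/card_gt0P; exists t.
have cR t : 0 < (fiber_card E t)%:R :> R by rewrite ltr0n fiber_card_gt0.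
have BR : 0 < #|B|%:R :> R by rewrite ltr0n.
have VR : 0 < (#|V|.+1)%:R :> R by rewrite ltr0n.
rewrite (eq_bigr (fun t => ln (#|T|%:R / (fiber_card E t)%:R))); last first.
  by move=> t _; rewrite ln_div ?posrE.
apply: le_trans (sum_ln_le_ln_mean B0 (fun t _ => divr_gt0 TR (cR t))) _.
have S1 : \sum_(t in B) ((fiber_card E t)%:R)^-1 <= (#|V|.+1)%:R :> R.
  apply: le_trans (_ : \sum_t ((fiber_card E t)%:R)^-1 <= _).
    rewrite [X in _ <= X](bigID (mem B)) /= lerDl.
    by apply: sumr_ge0 => t _; rewrite invr_ge0 ler0n.
  by have := sum_inv_fiber_card_le E; rewrite card_option.
have S0 : 0 < \sum_(t in B) ((fiber_card E t)%:R)^-1 :> R.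
  case/card_gt0P: B0 => t0 t0B; rewrite (bigD1 t0) //= ltr_pwDl ?invr_gt0 //.
  by apply: sumr_ge0 => t _; rewrite invr_ge0 ler0n.
rewrite -mulr_sumr.
apply: le_trans (_ : #|B|%:R * ln (#|T|%:R * (#|V|.+1)%:R / #|B|%:R) <= _).
  rewrite ler_wpM2l ?ler0n // ler_ln ?posrE ?divr_gt0 ?mulr_gt0 //.
  by rewrite ler_pM2r ?invr_gt0 // ler_pM2l.
rewrite ln_div ?posrE ?mulr_gt0 // lnM ?posrE //.
have := mul_ln_ratio_le R (max_card B); rewrite -[#|predT|]/#|T|.
set x := ln (#|V|.+1)%:R; lra.
Qed.

(* Fano: [Y] is a function of [Phi] together with the error value. *)
Lemma fiber_entropy_fano (V : finType) (U : eqType) (Y est : T -> V) (Phi : T -> U) :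
  determines Phi est ->
  fiber_entropy Y
    <= fiber_entropy Phi + 2 * #|T|%:R + #|[pred t | est t != Y t]|%:R * ln (#|V|.+1)%:R.
Proof.
move=> det; rewrite -addrA.
apply: le_trans (_ : fiber_entropy (fun t => (Phi t, error_value est Y t)) <= _).
  apply: fiber_entropy_le_det => t1 t2 [/det e1]; rewrite /error_value.
  case: eqP => h1; case: eqP => h2 //=; last by case.
  by rewrite -h1 -h2 e1.
by apply: le_trans (fiber_entropy_pair _ _) _; rewrite lerD2l fiber_entropy_error_value.
Qed.

End FiberEntropy.

Section Entropy2.
Variables (R : realType) (T : finType).
Hypothesis T_gt0 : (0 < #|T|)%N.

Local Notation H := (entropy2 R).

Let scale_gt0 : 0 < #|T|%:R * ln 2 :> R.
Proof. by rewrite mulr_gt0 ?ltr0n // ln_gt0 ?ltr1n. Qed.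

Lemma entropy2_le_det (U V : eqType) (f : T -> U) (g : T -> V) :
  determines g f -> H f <= H g.
Proof.
by move=> det; rewrite !entropy2E ler_pM2r ?invr_gt0 // fiber_entropy_le_det.
Qed.

Lemma entropy2_pair (U V : eqType) (f : T -> U) (g : T -> V) :
  H (fun t => (f t, g t)) <= H f + H g.
Proof.
by rewrite !entropy2E -mulrDl ler_pM2r ?invr_gt0 // fiber_entropy_pair.
Qed.

Lemma entropy2_seq (I : Type) (U : eqType) (f : I -> T -> U) (s : seq I) :
  H (fun t => map (f^~ t) s) <= \sum_(i <- s) H (f i).
Proof.
rewrite entropy2E; under eq_bigr do rewrite entropy2E.
by rewrite -mulr_suml ler_pM2r ?invr_gt0 // fiber_entropy_seq.
Qed.

Lemma entropy2_seq_le (I : Type) (U : eqType) (f : I -> T -> U) (s : seq I) (c : R) :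
  (forall i, H (f i) <= c) -> H (fun t => map (f^~ t) s) <= (size s)%:R * c.
Proof.
move=> Hf; apply: le_trans (entropy2_seq f s) (le_trans (ler_sum _ (fun i _ => Hf i)) _).
by rewrite big_const_seq count_predT -Monoid.iteropE /= mulr_natl.
Qed.

Lemma entropy2_tuple (n : nat) (f : T -> n.-tuple bool) : H f <= n%:R.
Proof.
rewrite entropy2E ler_pdivrMr // (le_trans (fiber_entropy_le_card _ f)) //.
by rewrite card_tuple card_bool natrX lnXn ?ltr0n // -mulr_natl; nra.
Qed.

End Entropy2.

Section Files.
Variables (R : realType) (D F : nat).
Local Notation T := (files D F).
Local Notation H := (entropy2 R).

Lemma card_files : #|{: T}| = (2 ^ (F * D))%N.
Proof. by rewrite card_ffun card_tuple card_bool card_ord expnM. Qed.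

Lemma card_files_gt0 : (0 < #|{: T}|)%N.
Proof. by rewrite card_files expn_gt0. Qed.

Lemma entropy2_files : H (fun w : T => w) = (F * D)%:R.
Proof.
have l2 : 0 < ln 2 :> R by rewrite ln_gt0 ?ltr1n.
rewrite entropy2E fiber_entropy_id card_files natrX lnXn ?ltr0n // -[ln 2 *+ _]mulr_natl.
by field; rewrite lt0r_neq0 //= expf_neq0 // pnatr_eq0.
Qed.

Lemma entropy2_select_files (P : finType) (sg : P -> 'I_D) : injective sg ->
  (#|P| * F)%:R <= H (fun w : T => [ffun p => w (sg p)]).
Proof.
move=> sg_inj; pose rest := enum [predC codom sg].
have size_rest : (#|P| + size rest)%N = D.
  by rewrite -cardE -(card_codom sg_inj) cardC card_ord.
have Hrest : H (fun w : T => map (fun i => w i) rest) <= (size rest)%:R * F%:R.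
  apply: (entropy2_seq_le (f := fun i (w : T) => w i) card_files_gt0) => i.
  exact: (@entropy2_tuple R _ card_files_gt0 F (fun w : T => w i)).
have Hsplit : H (fun w : T => w)
    <= H (fun w : T => ([ffun p => w (sg p)], map (fun i => w i) rest)).
  apply: (entropy2_le_det R card_files_gt0) => w1 w2 [e1 e2]; apply/ffunP => i.
  have [/codomP [p ->] | not_sg] := boolP (i \in codom sg).
    by have := congr1 (fun f : {ffun P -> F.-tuple bool} => f p) e1; rewrite !ffunE.
  have : i \in rest by rewrite mem_enum.
  by move: i {not_sg}; apply/eq_in_map.
have := le_trans Hsplit (entropy2_pair R card_files_gt0 _ _).
have total : (F * D)%:R = #|P|%:R * F%:R + (size rest)%:R * F%:R :> R.
  by rewrite -{1}size_rest natrM natrD; ring.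
rewrite entropy2_files total natrM; move: Hrest; lra.
Qed.

Lemma entropy2_fano (P : finType) (sg : P -> 'I_D) (U : eqType) (Phi : T -> U)
    (est : T -> {ffun P -> F.-tuple bool}) :
  injective sg -> determines Phi est ->
  (#|P| * F)%:R <= H Phi + 2 / ln 2
     + #|[pred w | est w != [ffun p => w (sg p)]]|%:R / #|{: T}|%:R
       * ((#|P| * F).+1)%:R.
Proof.
move=> sg_inj det.
have TR : 0 < #|{: T}|%:R :> R by rewrite ltr0n card_files_gt0.
have l2 : 0 < ln 2 :> R by rewrite ln_gt0 ?ltr1n.
have fano := fiber_entropy_fano R (fun w : T => [ffun p => w (sg p)]) det.
set B := #|[pred w | _]|%:R in fano *.
have lnV : ln (#|{: {ffun P -> F.-tuple bool}}|.+1)%:R <= ((#|P| * F).+1)%:R * ln 2 :> R.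
  rewrite card_ffun card_tuple card_bool -expnM.
  apply: le_trans (_ : ln (2 ^ (#|P| * F).+1)%:R <= _).
    rewrite ler_ln ?posrE ?ltr0n ?expn_gt0 // ler_nat expnS mul2n -addnn mulnC.
    by rewrite -add1n leq_add2r expn_gt0.
  by rewrite natrX lnXn ?ltr0n // mulr_natl.
apply: le_trans (entropy2_select_files sg_inj) _.
rewrite !entropy2E ler_pdivrMr ?mulr_gt0 //.
apply: le_trans fano (le_trans (lerD (lexx _) (ler_wpM2l (ler0n _ _) lnV)) _).
by rewrite le_eqVlt; apply/predU1P; left; field; rewrite !lt0r_neq0.
Qed.

End Files.

Lemma card_users_within (h r : nat) (L : {set 'I_h}) :
  #|[set u : user h r | val u \subset L]| = 'C(#|L|, r).
Proof.
rewrite -cards_draws -(card_imset _ val_inj); apply: eq_card => B.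
rewrite inE; apply/imsetP/andP => [[u uL ->] | [BL cardB]].
  by rewrite inE in uL; split => //; apply: (valP u).
by exists (exist _ B cardB : user h r); rewrite ?inE.
Qed.

Lemma users_within_inj (h r s : nat) (L : {set 'I_h}) : (s <= 'C(#|L|, r))%N ->
  exists us : 'I_s -> user h r, injective us /\ forall i, val (us i) \subset L.
Proof.
rewrite -card_users_within => sA.
exists (fun i => enum_val (widen_ord sA i)); split.
  by move=> i j /enum_val_inj /(congr1 val) ij; apply: val_inj.
by move=> i; have := enum_valP (widen_ord sA i); rewrite inE.
Qed.

Section CutSet.
Variables (R : realType) (h r D : nat) (M N R1 R2 : R).

Definition decoder_input F (sc : scheme h r D F M N R1 R2)
    (k : user h r) (d : demand h r D) (w : files D F) :=
  (user_cache sc k w, received sc k d w).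

Lemma scheme_fano F (sc : scheme h r D F M N R1 R2) (P : finType)
    (k : P -> user h r) (d : P -> demand h r D) (U : eqType) (Phi : files D F -> U)
    (eps : R) :
  injective (fun p => d p (k p)) ->
  (forall p, determines Phi (decoder_input sc (k p) (d p))) ->
  (forall p, err_prob sc (k p) (d p) < eps) ->
  (#|P| * F)%:R <= entropy2 R Phi + 2 / ln 2 + #|P|%:R * eps * ((#|P| * F).+1)%:R.
Proof.
move=> req_inj det err.
pose decoded p w := decoder sc (k p) (d p) (user_cache sc (k p) w) (received sc (k p) (d p) w).
pose est w := [ffun p => decoded p w] : {ffun P -> F.-tuple bool}.
have est_det : determines Phi est.
  by move=> w1 w2 e; apply/ffunP => p; rewrite !ffunE /decoded; case: (det p _ _ e) => -> ->.
apply: le_trans (entropy2_fano R req_inj est_det) _; rewrite lerD2l.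
apply: ler_wpM2r; first exact: ler0n.
have TR : 0 < #|{: files D F}|%:R :> R by rewrite ltr0n card_files_gt0.
rewrite ler_pdivrMr //.
have -> : #|P|%:R * eps * #|{: files D F}|%:R = \sum_(p : P) (eps * #|{: files D F}|%:R).
  by rewrite sumr_const -mulrA mulr_natl.
apply: le_trans (_ : \sum_p #|[pred w | decoded p w != w (d p (k p))]|%:R <= _).
  rewrite -natr_sum ler_nat; apply: card_le_sum_cover => w.
  rewrite inE => /eqP est_err.
  have [p bad] : exists p, est w p != w (d p (k p)).
    apply/existsP; rewrite -negb_forall; apply/negP => /forallP ok.
    by apply: est_err; apply/ffunP => p; rewrite [RHS]ffunE; apply/eqP.
  by exists p; rewrite inE; move: bad; rewrite ffunE.
apply: ler_sum => p _; have := err p; rewrite /err_prob ltr_pdivrMr // => /ltW.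
by congr (_ <= _); congr (_%:R); apply: eq_card => w; rewrite !inE.
Qed.

Lemma achievable_cutset (P : finType) (k : P -> user h r) (d : P -> demand h r D) (b : R) :
  achievable h r D M N R1 R2 -> injective (fun p => d p (k p)) ->
  (forall F (sc : scheme h r D F M N R1 R2),
     exists (U : eqType) (Phi : files D F -> U),
       (forall p, determines Phi (decoder_input sc (k p) (d p))) /\
       entropy2 R Phi <= b * F%:R) ->
  #|P|%:R <= b.
Proof.
move=> ach req_inj cut.
apply: (@ler_slope_of_eventually _ (2 / ln 2) _ _ #|P|%:R) => // eps eps_gt0.
have [F0 HF] := ach eps eps_gt0; exists F0 => F /HF [sc err].
have [U [Phi [det HPhi]]] := cut F sc.
have := scheme_fano req_inj det (fun p => err _ _).
rewrite -natrM => /le_trans; apply; apply: lerD; first by rewrite lerD2r.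
by rewrite -[_.+1%:R]natr1 natrM.
Qed.

Section Cuts.
Variables (F : nat) (sc : scheme h r D F M N R1 R2).
Local Notation H := (entropy2 R).
Let T_gt0 := @card_files_gt0 D F.

Definition relay_cut (X : seq ('I_h * demand h r D)) (L : seq 'I_h) (Z : seq (user h r))
    (w : files D F) :=
  (map (fun x => server_sig sc x.1 x.2 w) X, map (fun i => relay_cache sc i w) L,
   map (fun u => user_cache sc u w) Z).

Lemma relay_cut_determines (X : seq ('I_h * demand h r D)) (L : seq 'I_h)
    (Z : seq (user h r)) (k : user h r) (d : demand h r D) : k \in Z ->
  (forall i, i \in val k -> (i \in L) && ((i, d) \in X)) ->
  determines (relay_cut X L Z) (decoder_input sc k d).
Proof.
move=> kZ kLX w1 w2 [/eq_in_map eX /eq_in_map eL /eq_in_map eZ].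
congr (_, _); first exact: eZ.
apply/ffunP => i; rewrite !ffunE; case: ifP => // ik.
by have /andP [iL iX] := kLX i ik; rewrite (eL i iL) (eX (i, d) iX).
Qed.

Lemma entropy2_relay_cut (X : seq ('I_h * demand h r D)) (L : seq 'I_h)
    (Z : seq (user h r)) :
  H (relay_cut X L Z) <= (size X)%:R * (R1 * F%:R) + (size L)%:R * (N * F%:R)
                         + (size Z)%:R * (M * F%:R).
Proof.
apply: le_trans (entropy2_pair R T_gt0 _ _) _; apply: lerD; last first.
  by apply: entropy2_seq_le => // u; apply: user_cache_ok.
apply: le_trans (entropy2_pair R T_gt0 _ _) _; apply: lerD.
  apply: entropy2_seq_le => // x.
  by apply: le_trans (entropy2_tuple R T_gt0 _) _; apply: n1_le.
by apply: entropy2_seq_le => // i; apply: relay_cache_ok.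
Qed.

Definition user_cut (k : user h r) (Y : seq ('I_h * demand h r D)) (w : files D F) :=
  (map (fun x => relay_sig sc x.1 x.2 k (server_sig sc x.1 x.2 w) (relay_cache sc x.1 w)) Y,
   user_cache sc k w).

Lemma user_cut_determines (k : user h r) (Y : seq ('I_h * demand h r D))
    (d : demand h r D) :
  (forall i, i \in val k -> (i, d) \in Y) -> determines (user_cut k Y) (decoder_input sc k d).
Proof.
move=> kY w1 w2 [/eq_in_map eY eZ]; congr (_, _); first exact: eZ.
by apply/ffunP => i; rewrite !ffunE; case: ifP => // /kY /eY.
Qed.

Lemma entropy2_user_cut (k : user h r) (Y : seq ('I_h * demand h r D)) :
  H (user_cut k Y) <= (size Y)%:R * (R2 * F%:R) + M * F%:R.
Proof.
apply: le_trans (entropy2_pair R T_gt0 _ _) _; apply: lerD; last exact: user_cache_ok.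
apply: entropy2_seq_le => // x.
by apply: le_trans (entropy2_tuple R T_gt0 _) _; apply: n2_le.
Qed.

End Cuts.

Lemma rate1_cutset (L : {set 'I_h}) (q s : nat) (us : 'I_s -> user h r) :
  achievable h r D M N R1 R2 -> (0 < D)%N -> (q * s <= D)%N ->
  injective us -> (forall i, val (us i) \subset L) ->
  (q * s)%:R <= (q * #|L|)%:R * R1 + #|L|%:R * N + s%:R * M.
Proof.
move=> ach D_gt0 qsD us_inj usL.
have PD : (#|{: 'I_q * 'I_s}| <= D)%N by rewrite card_prod !card_ord.
pose file (p : 'I_q * 'I_s) : 'I_D := widen_ord PD (enum_rank p).
have file_inj : injective file.
  by move=> p p' /(congr1 val) /= e; apply/enum_rank_inj/val_inj.
pose dem (j : 'I_q) : demand h r D := ffun_extend us (fun i => file (j, i)) (Ordinal D_gt0).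
have demE j i : dem j (us i) = file (j, i) by rewrite ffun_extendE.
pose X := [seq (x, dem j) | j <- enum 'I_q, x <- enum L].
have -> : (q * s)%:R = #|{: 'I_q * 'I_s}|%:R :> R by rewrite card_prod !card_ord.
apply: (achievable_cutset (k := fun p => us p.2) (d := fun p => dem p.1)) => //.
  by move=> [j i] [j' i']; rewrite /= !demE => /file_inj.
move=> F sc; exists _, (relay_cut sc X (enum L) (map us (enum 'I_s))); split.
  move=> [j i]; apply: relay_cut_determines; first by rewrite map_f ?mem_enum.
  move=> x /(subsetP (usL i)) xL; rewrite mem_enum xL /=.
  by apply: allpairs_f; rewrite mem_enum.
apply: le_trans (entropy2_relay_cut sc X (enum L) (map us (enum 'I_s))) _.
rewrite size_allpairs size_map !size_enum_ord -cardE.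
by rewrite !natrM; nra.
Qed.

Lemma rate2_cutset (k : user h r) :
  achievable h r D M N R1 R2 -> D%:R <= (D * r)%:R * R2 + M.
Proof.
move=> ach; pose dem (j : 'I_D) : demand h r D := [ffun _ => j].
pose Y := [seq (i, dem j) | j <- enum 'I_D, i <- enum (val k)].
rewrite -[D in D%:R]card_ord.
apply: (achievable_cutset (k := fun _ => k) (d := dem)) => //.
  by move=> j j'; rewrite !ffunE.
move=> F sc; exists _, (user_cut sc k Y); split.
  move=> j; apply: user_cut_determines => i ik.
  by apply: allpairs_f; rewrite mem_enum.
apply: le_trans (entropy2_user_cut sc k Y) _.
rewrite size_allpairs !size_enum_ord -cardE (eqP (valP k)) !natrM; nra.
Qed.

End CutSet.

Lemma rate_of_cutset (R : realType) (q s l : nat) (M N x : R) : (0 < q)%N -> (0 < l)%N ->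
  (q * s)%:R <= (q * l)%:R * x + l%:R * N + s%:R * M ->
  (l%:R)^-1 * (s%:R - (s%:R * M + l%:R * N) / q%:R) <= x.
Proof.
move=> q_gt0 l_gt0 cut.
have qR : 0 < q%:R :> R by rewrite ltr0n.
have lR : 0 < l%:R :> R by rewrite ltr0n.
rewrite -subr_ge0.
have -> : x - (l%:R)^-1 * (s%:R - (s%:R * M + l%:R * N) / q%:R)
   = ((q * l)%:R * x + l%:R * N + s%:R * M - (q * s)%:R) / (q%:R * l%:R).
  by rewrite !natrM; field; rewrite !lt0r_neq0.
by rewrite divr_ge0 ?subr_ge0 // mulr_ge0 // ltW.
Qed.

Lemma rate1_lower_bound (R : realType) (h r D : nat) (M N R1 R2 : R) (l s : nat) :
  achievable h r D M N R1 R2 -> (0 < r)%N -> (r <= l <= h)%N ->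
  (1 <= s <= minn D 'C(l, r))%N ->
  (l%:R)^-1 * (s%:R - (s%:R * M + l%:R * N) / (D %/ s)%:R) <= R1.
Proof.
move=> ach r_gt0 /andP [rl lh] /andP [s_gt0]; rewrite leq_min => /andP [sD sC].
pose L := [set i : 'I_h | (i < l)%N].
have cardL : #|L| = l := card_ord_lt lh.
have [us [us_inj usL]] : exists us : 'I_s -> user h r,
    injective us /\ forall i, val (us i) \subset L.
  by apply: users_within_inj; rewrite cardL.
apply: rate_of_cutset; [by rewrite divn_gt0 | exact: leq_trans rl |].
rewrite -cardL; apply: rate1_cutset ach _ _ us_inj usL.
  exact: leq_trans sD.
exact: leq_divM.
Qed.

Unset Implicit Arguments. Set Strict Implicit.
Theorem theorem2 (R : realType) (h r D : nat) (M N R1 R2 : R) :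
  (0 < r)%N -> (r < h)%N -> ('C(h, r) <= D)%N ->
  0 <= M -> 0 <= N ->
  0 < M + r%:R * N -> M + r%:R * N <= D%:R ->
  achievable h r D M N R1 R2 ->
  (forall l s : nat, (r <= l <= h)%N -> (1 <= s <= minn D 'C(l, r))%N ->
     (l%:R)^-1 * (s%:R - (s%:R * M + l%:R * N) / (D %/ s)%:R) <= R1) /\
  (forall x : nat, (1 <= x <= minn D 'C(h, r))%N ->
     ((minn (x + r - 1) h)%:R)^-1 *
       (x%:R - (x%:R * M + (minn (x + r - 1) h)%:R * N) / (D %/ x)%:R) <= R1) /\
  (r%:R)^-1 * (1 - M / D%:R) <= R2.
Proof.
(* The bounds hold without the assumptions on M and N. *)
move=> r_gt0 r_lt_h CD _ _ _ _ ach.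
have D_gt0 : (0 < D)%N by apply: leq_trans CD; rewrite bin_gt0 ltnW.
split; first by move=> l s hl hs; apply: rate1_lower_bound ach r_gt0 hl hs.
split.
  move=> x /andP [x_gt0]; rewrite leq_min => /andP [xD xC].
  apply: (rate1_lower_bound ach r_gt0).
    by rewrite geq_minr andbT leq_min (ltnW r_lt_h) andbT; lia.
  rewrite x_gt0 leq_min xD.
  by case: (leqP (x + r - 1) h) => _ /=; rewrite ?leq_bin_addn_pred.
have user_k : #|[set i : 'I_h | (i < r)%N]| == r by rewrite card_ord_lt // ltnW.
have := rate2_cutset (exist (fun S : {set 'I_h} => #|S| == r) _ user_k) ach.
have := @rate_of_cutset R D 1 r M 0 R2 D_gt0 r_gt0.
by rewrite mul1r mulr0 !addr0 muln1 => /[apply].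
Qed.
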